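(* Let $n\ge 4$ and let $W$ be a euclidean metric Lie $n$-algebra, written as an orthogonal direct sum of ideals $W=\mathfrak{a}\oplus\mathfrak{s}^{(n)}_1\oplus\dots\oplus\mathfrak{s}^{(n)}_q$, where $\mathfrak{a}$ is abelian and each $\mathfrak{s}^{(n)}_i$ is a copy of the simple euclidean Lie $n$-algebra $\mathfrak{s}^{(n)}$. Suppose $W$ additionally carries an alternating $(n-1)$-linear bracket $[x_1,\dots,x_{n-1}]$ making it a Lie $(n-1)$-algebra, such that for every $x_1,\dots,x_{n-2}\in W$ the adjoint map $\mathrm{ad}_{x_1,\dots,x_{n-2}}:y\mapsto[x_1,\dots,x_{n-2},y]$ is skew-symmetric with respect to the inner product of $W$ and is a derivation of the $n$-bracket of $W$. Then each $\mathrm{ad}_{x_1,\dots,x_{n-2}}$ preserves each of the summands $\mathfrak{a},\mathfrak{s}^{(n)}_1,\dots,\mathfrak{s}^{(n)}_q$; consequently each of these summands is an ideal of the Lie $(n-1)$-algebra $(W,[\cdot,\dots,\cdot])$.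
   Context: All vector spaces are real and finite-dimensional. For $k\ge 2$, a Lie $k$-algebra is a vector space with an alternating $k$-linear bracket such that each $\mathrm{ad}_{x_1,\dots,x_{k-1}}:y\mapsto[x_1,\dots,x_{k-1},y]$ is a derivation of the bracket; an ideal is a subspace $I$ with $[I,W,\dots,W]\subset I$; it is abelian if all brackets vanish. A metric Lie $k$-algebra has a nondegenerate symmetric bilinear form for which all $\mathrm{ad}$ maps are skew-symmetric; euclidean means the form is positive definite. For $k\ge 3$, $\mathfrak{s}^{(k)}$ denotes the $(k+1)$-dimensional Lie $k$-algebra with basis $\boldsymbol e_1,\dots,\boldsymbol e_{k+1}$ and bracket $[\boldsymbol e_1,\dots,\widehat{\boldsymbol e_i},\dots,\boldsymbol e_{k+1}]=(-1)^i\boldsymbol e_i$ (hat denotes omission), with an inner product making this basis orthogonal with all $\langle\boldsymbol e_i,\boldsymbol e_i\rangle$ equal to the same positive number. *)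

From HB Require Import structures.
From mathcomp Require Import all_boot all_order all_algebra.
Set Implicit Arguments. Unset Strict Implicit. Unset Printing Implicit Defensive.
Import Order.TTheory GRing.Theory Num.Theory.
Local Open Scope ring_scope.

Section NAlg.
Variables (R : rcfType) (V : vectType R).

Definition upd (k : nat) (x : 'I_k -> V) (i : 'I_k) (u : V) : 'I_k -> V :=
  fun j => if j == i then u else x j.

Definition snoc (k : nat) (x : 'I_k -> V) (y : V) : 'I_k.+1 -> V :=
  fun j => match unlift ord_max j with Some j' => x j' | None => y end.

Definition multilinear (k : nat) (f : ('I_k -> V) -> V) : Prop :=
  forall (x : 'I_k -> V) (i : 'I_k) (a : R) (u v : V),
    f (upd x i (a *: u + v)) = a *: f (upd x i u) + f (upd x i v).

Definition alternating (k : nat) (f : ('I_k -> V) -> V) : Prop :=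
  forall (x : 'I_k -> V) (i j : 'I_k), i != j -> x i = x j -> f x = 0.

Definition ad (k : nat) (f : ('I_k.+1 -> V) -> V) (x : 'I_k -> V) : V -> V :=
  fun y => f (snoc x y).

Definition derivation (m : nat) (D : V -> V) (f : ('I_m -> V) -> V) : Prop :=
  forall x : 'I_m -> V, D (f x) = \sum_(i < m) f (upd x i (D (x i))).

Definition lie_alg (k : nat) (f : ('I_k.+1 -> V) -> V) : Prop :=
  [/\ multilinear f, alternating f & forall x, derivation (ad f x) f].

Definition euclidean_form (form : V -> V -> R) : Prop :=
  [/\ forall a u v w, form (a *: u + v) w = a * form u w + form v w,
      forall u v, form u v = form v u
    & forall u, u != 0 -> 0 < form u u].

Definition skew_adj (form : V -> V -> R) (D : V -> V) : Prop :=
  forall y z, form (D y) z = - form y (D z).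

Definition is_ideal (k : nat) (f : ('I_k.+1 -> V) -> V) (I : {vspace V}) : Prop :=
  forall x : 'I_k.+1 -> V, x ord0 \in I -> f x \in I.

Definition is_abelian (m : nat) (f : ('I_m -> V) -> V) (I : {vspace V}) : Prop :=
  forall x : 'I_m -> V, (forall i, x i \in I) -> f x = 0.

(* S (with restricted bracket and inner product) is a copy of the euclidean
   Lie n-algebra s^(n), n = k+2: it has a basis b_0,...,b_{n} (0-based, so
   b_j corresponds to e_{j+1}), orthogonal with all norms equal to c > 0, and
   [b_0,...,^b_j,...,b_n] = (-1)^(j+1) b_j. *)
Definition sn_copy (k : nat) (f : ('I_k.+2 -> V) -> V)
    (form : V -> V -> R) (S : {vspace V}) : Prop :=
  exists (b : 'I_k.+3 -> V) (c : R),
    [/\ 0 < c,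
        basis_of S (codom b),
        forall i j, form (b i) (b j) = (if i == j then c else 0)
      & forall j : 'I_k.+3, f (fun l : 'I_k.+2 => b (lift j l)) = (-1) ^+ j.+1 *: b j].

End NAlg.

From HB Require Import structures.
From mathcomp Require Import all_boot all_order all_algebra.
From Stdlib Require Import FunctionalExtensionality.
Import Order.TTheory GRing.Theory Num.Theory.
Local Open Scope ring_scope.
Set Implicit Arguments. Unset Strict Implicit.

(* Let D = ad_{x_1,...,x_{n-2}} be an adjoint map of the (n-1)-bracket; by
   hypothesis D is linear, skew-symmetric and a derivation of the n-bracket.
   (1) A copy S of s^(n) is perfect: each basis vector b_j is, up to sign, the
       n-bracket of the other basis vectors.  Applying the derivation rule to
       such a bracket gives a sum of n-brackets each of which still has an
       argument in S (there are n >= 2 arguments), hence lies in S because S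
       is an ideal.  By linearity D preserves S.
   (2) For the abelian summand A, write D v = a + t with a in A and t in the
       sum of the S_i.  Skewness and (1) give <D v, s> = -<v, D s> = 0 for
       s in S_i, and A is orthogonal to each S_i, so <t, t> = 0, i.e. t = 0.
   (3) A subspace stable under every ad map of an alternating bracket is an
       ideal: swapping the first and last arguments only changes a sign. *)

Section Brackets.
Variables (R : rcfType) (V : vectType R).

Lemma upd_comm m (x : 'I_m -> V) i j u v :
  i != j -> upd (upd x j v) i u = upd (upd x i u) j v.
Proof.
move=> ij; apply: functional_extensionality => l; rewrite /upd.
by case: (eqVneq l i) => [->|//]; rewrite (negbTE ij).
Qed.

Lemma upd_self m (x : 'I_m -> V) i : upd x i (x i) = x.
Proof.
by apply: functional_extensionality => l; rewrite /upd; case: eqP => [->|].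
Qed.

Lemma multilinearD m (f : ('I_m -> V) -> V) : multilinear f ->
  forall x i u v, f (upd x i (u + v)) = f (upd x i u) + f (upd x i v).
Proof. by move=> ml x i u v; have := ml x i 1 u v; rewrite !scale1r. Qed.

(* Exchanging two arguments of a multilinear alternating map changes the sign:
   expand f(.., x_i + x_j, .., x_i + x_j, ..) = 0 by bilinearity. *)
Lemma alternating_swap m (f : ('I_m -> V) -> V) :
  multilinear f -> alternating f -> forall x i j, i != j ->
  f (upd (upd x j (x i)) i (x j)) = - f x.
Proof.
move=> ml al x i j ij.
pose g u v := f (upd (upd x j v) i u).
have gDl u u' v : g (u + u') v = g u v + g u' v by rewrite /g multilinearD.
have gDr u v v' : g u (v + v') = g u v + g u v'.
  by rewrite /g !(upd_comm _ _ _ ij) multilinearD.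
have g_diag w : g w w = 0.
  by apply: (al _ i j ij); rewrite /upd eqxx eq_sym (negbTE ij) eqxx.
have : g (x i + x j) (x i + x j) = 0 by apply: g_diag.
rewrite gDl !gDr !g_diag add0r addr0 => /eqP; rewrite addr_eq0 => /eqP gji.
by rewrite -[LHS]/(g (x j) (x i)) -[g (x j) (x i)]opprK -gji /g !upd_self.
Qed.

Lemma ideal_any_slot m (f : ('I_m.+1 -> V) -> V) (I : {vspace V}) :
  multilinear f -> alternating f -> is_ideal f I ->
  forall z l, z l \in I -> f z \in I.
Proof.
move=> ml al idI z l zl.
have [l0|nl0] := eqVneq l ord0; first by apply: idI; rewrite -l0.
rewrite -[f z]opprK -(alternating_swap ml al z nl0) rpredN; apply: idI.
by rewrite /upd eq_sym (negbTE nl0) eqxx.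
Qed.

Lemma snoc_upd m (x : 'I_m -> V) y : snoc x y = upd (snoc x 0) ord_max y.
Proof.
apply: functional_extensionality => j; rewrite /upd /snoc.
case: unliftP => [j' ->|->]; last by rewrite eqxx.
by case: eqP => // E; have := neq_lift ord_max j'; rewrite E eqxx.
Qed.

Lemma snoc_eta m (y : 'I_m.+1 -> V) :
  y = snoc (fun j => y (widen_ord (leqnSn m) j)) (y ord_max).
Proof.
apply: functional_extensionality => j; rewrite /snoc.
case: unliftP => [j' ->|-> //]; congr y; apply: val_inj => /=.
by rewrite /bump leqNgt ltn_ord.
Qed.

Lemma ad_linear m (f : ('I_m.+1 -> V) -> V) x : multilinear f -> linear (ad f x).
Proof.
by move=> ml a u v; rewrite /ad (snoc_upd x (a *: u + v)) (snoc_upd x u) (snoc_upd x v) ml.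
Qed.

Section LinearMaps.
Variables (D : V -> V) (linD : linear D).

Lemma linearD_fun u v : D (u + v) = D u + D v.
Proof. by have := linD 1 u v; rewrite !scale1r. Qed.

Lemma linear0_fun : D 0 = 0.
Proof. by apply: (addrI (D 0)); rewrite -linearD_fun !addr0. Qed.

Lemma linearZ_fun a u : D (a *: u) = a *: D u.
Proof. by rewrite -[a *: u]addr0 linD linear0_fun addr0. Qed.

Lemma linear_span_stable (U : {vspace V}) (X : seq V) :
  (forall x, x \in X -> D x \in U) -> forall v, v \in <<X>>%VS -> D v \in U.
Proof.
move=> DX; rewrite span_def big_seq.
apply: (big_ind (fun Y : {vspace V} => forall v, v \in Y -> D v \in U)).
- by move=> v; rewrite memv0 => /eqP ->; rewrite linear0_fun mem0v.
- move=> Y1 Y2 DY1 DY2 t /memv_addP [u u1 [v v2 ->]].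
  by rewrite linearD_fun; apply: memvD; [apply: DY1 | apply: DY2].
- by move=> x Xx v /vlineP [a ->]; rewrite linearZ_fun; apply/memvZ/DX.
Qed.

End LinearMaps.

Lemma derivation_bracket_in_ideal m (f : ('I_m.+2 -> V) -> V) (I : {vspace V})
    (D : V -> V) :
  multilinear f -> alternating f -> is_ideal f I -> derivation D f ->
  forall z, (forall l, z l \in I) -> D (f z) \in I.
Proof.
move=> ml al idI derD z zI; rewrite derD; apply: memv_suml => l _.
pose l' : 'I_m.+2 := if l == ord0 then ord_max else ord0.
have l'l : l' != l by rewrite /l'; case: (eqVneq l ord0) => [->|]; rewrite // eq_sym.
by apply: (ideal_any_slot ml al idI (l := l')); rewrite /upd (negbTE l'l).
Qed.

Lemma sn_copy_stable k (f : ('I_k.+2 -> V) -> V) (form : V -> V -> R)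
    (S : {vspace V}) (D : V -> V) :
  multilinear f -> alternating f -> is_ideal f S -> derivation D f ->
  linear D -> sn_copy f form S -> forall v, v \in S -> D v \in S.
Proof.
move=> ml al idS derD linD [b [c [_ bas _ brb]]].
have bS l : b l \in S by apply: (basis_mem bas); apply: codom_f.
rewrite -(span_basis bas); apply: linear_span_stable => // _ /codomP [j ->].
have -> : b j = (-1) ^+ j.+1 *: f (fun l => b (lift j l)).
  by rewrite brb scalerA -expr2 sqrr_sign scale1r.
rewrite linearZ_fun // memvZ // (span_basis bas).
by apply: (derivation_bracket_in_ideal ml al idS derD) => l.
Qed.

Lemma ideal_of_ad_stable m (f : ('I_m.+1 -> V) -> V) (I : {vspace V}) :
  (0 < m)%N -> multilinear f -> alternating f ->
  (forall x v, v \in I -> ad f x v \in I) -> is_ideal f I.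
Proof.
move=> m_gt0 ml al adI x x0I.
have last_neq0 : (ord_max : 'I_m.+1) != ord0 by rewrite -lt0n.
rewrite -[f x]opprK -(alternating_swap ml al x last_neq0) rpredN.
set y := upd _ _ _; rewrite (snoc_eta y); apply: adI.
by rewrite /y /upd eqxx.
Qed.

Section Orthogonality.
Variables (form : V -> V -> R) (eucl : euclidean_form form).

Lemma formDl u v w : form (u + v) w = form u w + form v w.
Proof. by case: eucl => linl _ _; have := linl 1 u v w; rewrite scale1r mul1r. Qed.

Lemma form0l w : form 0 w = 0.
Proof. by apply: (addrI (form 0 w)); rewrite -formDl !addr0. Qed.

Lemma form_anisotropic t : form t t = 0 -> t = 0.
Proof.
case: eucl => _ _ pos tt0; apply/eqP/negPn/negP => t_neq0.
by have := pos t t_neq0; rewrite tt0 ltxx.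
Qed.

Lemma orth_sum q (S : 'I_q -> {vspace V}) u :
  (forall i t, t \in S i -> form u t = 0) ->
  forall t, t \in (\sum_(i < q) S i)%VS -> form u t = 0.
Proof.
case: (eucl) => _ sym _ uS.
apply: (big_ind (fun U : {vspace V} => forall t, t \in U -> form u t = 0)).
- by move=> t; rewrite memv0 => /eqP ->; rewrite sym form0l.
- move=> U1 U2 oU1 oU2 t /memv_addP [t1 t1U [t2 t2U ->]].
  by rewrite sym formDl -!(sym u) oU1 ?oU2 ?addr0.
- by move=> i _; apply: uS.
Qed.

Lemma skew_stable_complement q (A : {vspace V}) (S : 'I_q -> {vspace V})
    (D : V -> V) :
  (A + \sum_(i < q) S i)%VS = fullv ->
  (forall i u v, u \in A -> v \in S i -> form u v = 0) ->
  skew_adj form D -> (forall i v, v \in S i -> D v \in S i) ->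
  forall v, v \in A -> D v \in A.
Proof.
move=> full oAS skD DS v vA.
have : D v \in (A + \sum_(i < q) S i)%VS by rewrite full memvf.
case/memv_addP => a aA [t tS Dv_eq].
have Dv_t : form (D v) t = 0.
  by apply: (orth_sum _ tS) => i s sS; rewrite skD (oAS i) ?DS ?oppr0.
have a_t : form a t = 0 by apply: (orth_sum _ tS) => i s; apply: oAS.
have t0 : t = 0 by apply: form_anisotropic; rewrite -Dv_t Dv_eq formDl a_t add0r.
by rewrite Dv_eq t0 addr0.
Qed.

End Orthogonality.

End Brackets.

Theorem lemma3p0 (R : rcfType) (W : vectType R) (k : nat) (hk : (2 <= k)%N)
  (form : W -> W -> R) (brn : ('I_k.+2 -> W) -> W) (brm : ('I_k.+1 -> W) -> W)
  (A : {vspace W}) (q : nat) (S : 'I_q -> {vspace W}) :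
  euclidean_form form ->
  lie_alg brn ->
  (forall x : 'I_k.+1 -> W, skew_adj form (ad brn x)) ->
  (A + \sum_(i < q) S i)%VS = fullv ->
  directv (A + \sum_(i < q) S i)%VS ->
  (forall (i : 'I_q) u v, u \in A -> v \in S i -> form u v = 0) ->
  (forall (i j : 'I_q) u v, i != j -> u \in S i -> v \in S j -> form u v = 0) ->
  is_ideal brn A -> is_abelian brn A ->
  (forall i, is_ideal brn (S i)) ->
  (forall i, sn_copy brn form (S i)) ->
  lie_alg brm ->
  (forall x : 'I_k -> W, skew_adj form (ad brm x)) ->
  (forall x : 'I_k -> W, derivation (ad brm x) brn) ->
  (forall x : 'I_k -> W,
     (forall v, v \in A -> ad brm x v \in A) /\
     (forall (i : 'I_q) v, v \in S i -> ad brm x v \in S i)) /\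
  is_ideal brm A /\ (forall i : 'I_q, is_ideal brm (S i)).
Proof.
move=> eucl [mln aln _] _ full _ oAS _ _ _ idS sn [mlm alm _] skm derm.
have presS x i : forall v, v \in S i -> ad brm x v \in S i.
  exact: sn_copy_stable mln aln (idS i) (derm x) (ad_linear x mlm) (sn i).
have presA x : forall v, v \in A -> ad brm x v \in A.
  by move=> v; apply: (skew_stable_complement eucl full oAS (skm x) (presS x)).
have k_gt0 : (0 < k)%N by apply: leq_trans hk.
split; first by move=> x; split; [exact: presA | exact: presS].
split; first exact: ideal_of_ad_stable k_gt0 mlm alm presA.
by move=> i; apply: ideal_of_ad_stable k_gt0 mlm alm (presS^~ i).
Qed.
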